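(* Let $D_4(s,t) = 3s^2t^2$, $D_5(s,t) = s^4t + 4s^2t^3$, and $D_n(s,t) = t\,D_{n-1}(s,t) + s^2 D_{n-2}(s,t)$ for $n > 5$. For every integer $n \geq 4$ there exists $\epsilon(n) > 0$ such that for all real $s,t$ with $t>0$ and $t \leq s \leq t(1+\epsilon(n))$, the maximum of $|\det A|$ over all $A \in \mathcal{G}_s^{n\times n}([0,t])$ equals $D_n(s,t)$.
   Context: For a real number $s$, a positive integer $n$ and a set $P \subseteq \mathbb{R}$, $\mathcal{G}_s^{n\times n}(P)$ denotes the set of all $n\times n$ real upper Hessenberg matrices $A=(a_{ij})$ with $a_{i+1,i} = s$ for $1\le i\le n-1$, $a_{ij}=0$ for $i > j+1$, and $a_{ij}\in P$ for all $i \le j$. *)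

From HB Require Import structures.
From mathcomp Require Import all_boot all_order all_algebra.
From mathcomp Require Import reals.
Set Implicit Arguments. Unset Strict Implicit. Unset Printing Implicit Defensive.
Import Order.TTheory GRing.Theory Num.Theory.
Local Open Scope ring_scope.

Fixpoint Dn {R : ringType} (n : nat) (s t : R) : R :=
  match n with
  | 4 => 3 * s ^+ 2 * t ^+ 2
  | 5 => s ^+ 4 * t + 4 * s ^+ 2 * t ^+ 3
  | (k.+1 as m).+1 =>
      if (5 < n)%N then t * Dn m s t + s ^+ 2 * Dn k s t else 0
  | _ => 0
  end.

(* A is in G_s^{n x n}(P): upper Hessenberg, subdiagonal entries equal to s,
   zero below the subdiagonal, entries on/above the diagonal in P.
   Indices are 0-based ordinals: a_{i+1,i} corresponds to (i.+1, i). *)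
Definition in_Gs {R : ringType} (n : nat) (s : R) (P : pred R)
    (A : 'M[R]_n) : Prop :=
  forall i j : 'I_n,
    (i = j.+1 :> nat -> A i j = s) /\
    ((j.+1 < i)%N -> A i j = 0) /\
    ((i <= j)%N -> P (A i j)).

From HB Require Import structures.
From mathcomp Require Import all_boot all_order all_algebra.
From mathcomp Require Import reals ring lra.
Import Order.TTheory GRing.Theory Num.Theory.
Local Open Scope ring_scope.
Set Implicit Arguments. Unset Strict Implicit. Unset Printing Implicit Defensive.

(* Let E_k be (-1)^k times the k-th leading principal minor of A. Expanding
   along the last column gives E_{k+1} = - sum_{j<=k} s^(k-j) a_{j,k} E_j. Let
   u_k, v_k be the same s-weighted sums of the positive and negative parts of
   E_0, ..., E_{k-1}. Since 0 <= a_{j,k} <= t we get E_k <= t v_k and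
   -E_k <= t u_k, so (u_{k+1}, v_{k+1}) is dominated coordinatewise by the
   image of (u_k, v_k) under one of the moves (u, v) -> (s u + t v, s v) and
   (u, v) -> (s u, s v + t u). Hence |det A| is at most the value of this
   one-player game started at (1, 0) with n - 1 moves, and choosing a_{j,k} in
   {0, t} according to the signs of the minors realises every play, so the
   maximum of |det A| is exactly that value. For t <= s <= 5t/4 the value on
   the nonnegative quadrant is the maximum of at most three linear forms
   (and their swaps) whose coefficients follow the recursion of D_n, and at
   (1, 0) it equals D_n(s, t). *)

Section HessenbergMinors.
Variable R : pzRingType.
Implicit Types (a : nat -> nat -> R) (s : R).

(* [hess_minor a s k] is (-1)^k times the leading k x k principal minor of the
   upper Hessenberg matrix with entries [a i j] (i <= j) and subdiagonal [s];
   [hess_minor_table a s k] carries the values at all indices up to k. *)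
Fixpoint hess_minor_table a s k : nat -> R :=
  if k is k'.+1 then
    let e := hess_minor_table a s k' in
    fun i => if i == k then - \sum_(j < k) s ^+ (k' - j) * a j k' * e j else e i
  else fun _ => 1.

Definition hess_minor a s k := hess_minor_table a s k k.

Lemma hess_minor_tableE a s k i : (i <= k)%N -> hess_minor_table a s k i = hess_minor a s i.
Proof.
elim: k => [|k IH] /=; first by rewrite leqn0 => /eqP ->.
rewrite leq_eqVlt => /predU1P [-> //|lt_ik].
by rewrite ltn_eqF // IH.
Qed.

Lemma hess_minor0 a s : hess_minor a s 0 = 1.
Proof. by []. Qed.

Lemma hess_minorS a s k :
  hess_minor a s k.+1 = - \sum_(j < k.+1) s ^+ (k - j) * a j k * hess_minor a s j.
Proof.
rewrite /hess_minor /= eqxx; congr (- _); apply: eq_bigr => j _.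
by rewrite hess_minor_tableE // -ltnS.
Qed.

Lemma eq_hess_minor a b s n :
  (forall i j, (i <= j < n)%N -> a i j = b i j) ->
  forall k, (k <= n)%N -> hess_minor a s k = hess_minor b s k.
Proof.
move=> eq_ab; elim/ltn_ind=> k IH le_kn; case: k IH le_kn => [|k] IH le_kn //.
rewrite !hess_minorS; congr (- _); apply: eq_bigr => j _.
have le_jk : (j <= k)%N := ltn_ord j.
by rewrite eq_ab ?le_jk // IH // ltnW // (leq_ltn_trans le_jk).
Qed.

End HessenbergMinors.

Section HessenbergDeterminant.
Variables (R : fieldType) (n : nat) (s : R) (P : pred R) (A : 'M[R]_n.+1).
Hypotheses (s_neq0 : s != 0) (hessA : in_Gs s P A).

Let a i j := A (inord i) (inord j).
(* [y] kills every column of [A] but the last, so putting it as the first row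
   of a unimodular matrix reduces [\det A] to a single cofactor. *)
Let y i := hess_minor a s i / s ^+ i.

Lemma hess_minor_weighted_sum k : \sum_(i < k.+1) y i * a i k = - s * y k.+1.
Proof.
rewrite /y hess_minorS !mulNr mulrN opprK mulr_suml mulr_sumr.
apply: eq_bigr => i _.
have -> : s ^+ k.+1 = s * s ^+ (k - i) * s ^+ i by rewrite -mulrA -exprD subnK ?exprS // -ltnS.
by field; rewrite !expf_neq0.
Qed.

Lemma hess_left_kernel (j : 'I_n.+1) :
  \sum_(i < n.+1) y i * A i j = if (j < n)%N then 0 else - s * y n.+1.
Proof.
have -> : \sum_(i < n.+1) y i * A i j = \sum_(i < n.+1) y i * a i j.
  by apply: eq_bigr => i _; rewrite /a !inord_val.
rewrite -(big_mkord xpredT (fun i => y i * a i j)) (big_cat_nat _ (n := j.+1)) //=.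
rewrite big_mkord hess_minor_weighted_sum.
case: ltnP => [lt_jn|le_nj]; last first.
  have -> : nat_of_ord j = n by apply/eqP; rewrite eqn_leq le_nj -ltnS ltn_ord.
  by rewrite big_geq ?addr0.
have a_sub : a j.+1 j = s.
  by have [sub _] := hessA (inord j.+1) (inord j); apply: sub; rewrite !inordK // ltnW.
rewrite big_ltn // a_sub addrA mulNr mulrC addNr add0r.
rewrite big_nat_cond big1 // => i /andP [/andP [lt_ji lt_in] _].
have [_ [below _]] := hessA (inord i) (inord j).
by rewrite /a below ?mulr0 // !inordK.
Qed.

Lemma det_hessenberg :
  \det A = (-1) ^+ n.+1 * hess_minor (fun i j => A (inord i) (inord j)) s n.+1.
Proof.
pose Y : 'M[R]_n.+1 := \matrix_(i, j) (if i == ord0 then y j else (i == j)%:R).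
have det_Y : \det Y = 1.
  rewrite -det_tr det_trig; last first.
    apply/is_trig_mxP => i j lt_ij; rewrite !mxE.
    by case: eqP => [j0|_]; [rewrite j0 in lt_ij | rewrite -val_eqE /= gtn_eqF].
  rewrite big1 // => i _; rewrite !mxE; case: eqP => [->|_]; last by rewrite eqxx.
  by rewrite /y hess_minor0 expr0 divr1.
have YA0 j : (Y *m A) ord0 j = \sum_(i < n.+1) y i * A i j.
  by rewrite mxE; apply: eq_bigr => i _; rewrite mxE eqxx.
have YA i j : i != ord0 -> (Y *m A) i j = A i j.
  move=> /negbTE i_neq0; rewrite mxE (bigD1 i) //= big1 ?addr0.
    by rewrite mxE i_neq0 eqxx mul1r.
  by move=> k k_neq_i; rewrite mxE i_neq0 eq_sym (negbTE k_neq_i) mul0r.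
have det_subdiag : \det (row' ord0 (col' ord_max (Y *m A))) = s ^+ n.
  rewrite -det_tr det_trig.
    rewrite (eq_bigr (fun _ => s)) ?prodr_const ?card_ord // => i _.
    rewrite 3!mxE YA; last by rewrite eq_sym neq_lift.
    by have [sub _] := hessA (lift ord0 i) (lift ord_max i); apply: sub; rewrite lift0 lift_max.
  apply/is_trig_mxP => i j lt_ij; rewrite 3!mxE YA; last by rewrite eq_sym neq_lift.
  have [_ [below _]] := hessA (lift ord0 j) (lift ord_max i).
  by apply: below; rewrite lift0 lift_max.
have -> : \det A = \det (Y *m A) by rewrite det_mulmx det_Y mul1r.
rewrite (expand_det_row _ ord0) (bigD1 ord_max) //=.
rewrite big1 ?addr0 => [|j j_neq_max]; last first.
  rewrite YA0 hess_left_kernel ifT ?mul0r //.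
  by rewrite ltn_neqAle -ltnS ltn_ord andbT; move: j_neq_max; rewrite -val_eqE.
rewrite YA0 hess_left_kernel ltnn /cofactor det_subdiag /y -/a /= add0n !exprS.
by field; rewrite expf_neq0.
Qed.

End HessenbergDeterminant.

Lemma sum_pow_weightsS (R : pzSemiRingType) (x : R) (c : nat -> R) k :
  \sum_(i < k.+1) x ^+ (k - i) * c i = x * \sum_(i < k) x ^+ (k.-1 - i) * c i + c k.
Proof.
rewrite big_ord_recr /= subnn expr0 mul1r mulr_sumr; congr (_ + _).
apply: eq_bigr => i _; rewrite mulrA -exprS.
by case: k i => [[]//|k] i /=; rewrite subSn // -ltnS.
Qed.

Section Value.
Variables (R : realFieldType) (s t : R).
Implicit Types (b : bool) (c g : nat -> bool) (p q : R * R) (e : nat -> R) (a : nat -> nat -> R).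

Definition swap p : R * R := (p.2, p.1).

(* A state (u, v) stands for the s-weighted sums of the positive and negative
   parts of the minors computed so far; [step true] (resp. [step false])
   appends the largest admissible positive (resp. negative) minor. *)
Definition step b p : R * R :=
  if b then (s * p.1 + t * p.2, s * p.2) else (s * p.1, s * p.2 + t * p.1).

Fixpoint value m p : R :=
  if m is m'.+1 then Num.max (value m' (step true p)) (value m' (step false p))
  else t * Num.max p.1 p.2.

Lemma valueS m p : value m.+1 p = Num.max (value m (step true p)) (value m (step false p)).
Proof. by []. Qed.

Fixpoint walk c m p : R * R :=
  if m is m'.+1 then walk (fun i => c i.+1) m' (step (c 0%N) p) else p.

Lemma walkS c m p : walk c m.+1 p = step (c m) (walk c m p).
Proof. by elim: m c p => [|m IH] c p //=; rewrite -IH. Qed.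

Lemma eq_walk c c' m p : (forall i, (i < m)%N -> c i = c' i) -> walk c m p = walk c' m p.
Proof.
elim: m c c' p => [|m IH] c c' p // eq_c /=.
by rewrite eq_c //; apply: IH => i lt_im; apply: eq_c.
Qed.

Lemma value_walk m p : exists c, value m p = value 0 (walk c m p).
Proof.
elim: m p => [|m IH] p; first by exists xpredT.
pose b := value m (step false p) <= value m (step true p).
have [c value_c] := IH (step b p).
exists (fun i => if i is i'.+1 then c i' else b); rewrite -[RHS]value_c /= /b.
by case: leP => [/max_idPl|/ltW/max_idPr].
Qed.

Definition posneg e k : R * R :=
  (\sum_(i < k) s ^+ (k.-1 - i) * Num.max (e i) 0,
   \sum_(i < k) s ^+ (k.-1 - i) * Num.max (- e i) 0).

Lemma posnegS e k :
  posneg e k.+1 = (s * (posneg e k).1 + Num.max (e k) 0, s * (posneg e k).2 + Num.max (- e k) 0).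
Proof.
by rewrite /posneg /= (sum_pow_weightsS s (fun i => Num.max (e i) 0))
  (sum_pow_weightsS s (fun i => Num.max (- e i) 0)).
Qed.

Definition posneg_bounded e k := e k <= t * (posneg e k).2 /\ - e k <= t * (posneg e k).1.

Section NonNegative.
Hypotheses (s_ge0 : 0 <= s) (t_ge0 : 0 <= t).

Lemma step_ge0 b p : 0 <= p.1 -> 0 <= p.2 -> 0 <= (step b p).1 /\ 0 <= (step b p).2.
Proof. by case: b => p1_ge0 p2_ge0; split; rewrite /= ?addr_ge0 ?mulr_ge0. Qed.

Lemma walk_ge0 c m p : 0 <= p.1 -> 0 <= p.2 -> 0 <= (walk c m p).1 /\ 0 <= (walk c m p).2.
Proof.
elim: m c p => [|m IH] c p p1_ge0 p2_ge0 //=.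
by have [] := step_ge0 (c 0%N) p1_ge0 p2_ge0; apply: IH.
Qed.

Lemma le_value m p q : p.1 <= q.1 -> p.2 <= q.2 -> value m p <= value m q.
Proof.
elim: m p q => [|m IH] p q le1 le2 /=; first by rewrite ler_wpM2l // le_max2.
by rewrite le_max2 ?IH //= ?lerD ?ler_wpM2l.
Qed.

Lemma value_posneg_le e k m : (forall i, (k <= i < k + m)%N -> posneg_bounded e i) ->
  value 0 (posneg e (k + m)) <= value m (posneg e k).
Proof.
elim: m k => [|m IH] k bounded; first by rewrite addn0.
rewrite addnS -addSn; apply: le_trans (IH k.+1 _) _.
  by move=> i /andP [lt_ki lt_im]; apply: bounded; rewrite ltnW //= addnS.
have [e_le ge_e] : posneg_bounded e k by apply: bounded; rewrite leqnn addnS ltnS leq_addr.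
rewrite valueS le_max posnegS; apply/orP.
case: (leP 0 (e k)) => [e_ge0|e_lt0]; [left|right]; apply: le_value => /=.
- by rewrite lerD2l.
- by rewrite (max_idPr _) ?addr0 // oppr_le0.
- by rewrite addr0.
- by rewrite (max_idPl _) ?lerD2l // oppr_ge0 ltW.
Qed.

Lemma abs_le_value0 e k : posneg_bounded e k -> `|e k| <= value 0 (posneg e k).
Proof.
move=> [e_le ge_e]; rewrite ler_norml /= lerNl.
by rewrite (le_trans ge_e) ?(le_trans e_le) // ler_wpM2l // le_max lexx ?orbT.
Qed.

Lemma mul_le_max0 (y x : R) : 0 <= y <= t -> y * x <= t * Num.max x 0.
Proof.
move=> /andP [y_ge0 y_le_t]; apply: le_trans (_ : y * Num.max x 0 <= _).
  by rewrite ler_wpM2l // le_max lexx.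
by rewrite ler_wpM2r // le_max lexx orbT.
Qed.

Lemma hess_minor_posneg_bounded a k : (forall i, (i <= k)%N -> 0 <= a i k <= t) ->
  posneg_bounded (hess_minor a s) k.+1.
Proof.
move=> a_bound; rewrite /posneg_bounded /posneg /= hess_minorS opprK !mulr_sumr -sumrN.
split; apply: ler_sum => i _; have a_i := a_bound i (ltn_ord i).
- by rewrite -mulNr -mulrN mulrCA -mulrA ler_wpM2l ?exprn_ge0 // mulNr -mulrN mul_le_max0.
- by rewrite -mulrA [X in _ <= X]mulrCA ler_wpM2l ?exprn_ge0 // mul_le_max0.
Qed.

Lemma hess_minor_le_value a n : (forall i j, (i <= j <= n)%N -> 0 <= a i j <= t) ->
  `|hess_minor a s n.+1| <= value n (1, 0).
Proof.
move=> a_bound.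
have posneg1 : posneg (hess_minor a s) 1 = (1, 0).
  rewrite /posneg !big_ord1 hess_minor0 /= expr0 !mul1r (max_idPl ler01).
  by rewrite (max_idPr _) // oppr_le0.
rewrite -posneg1 -add1n; apply: le_trans (value_posneg_le _) => [|i /andP [lt0i le_in]].
  rewrite add1n; apply: abs_le_value0; apply: hess_minor_posneg_bounded => i le_in.
  by apply: a_bound; rewrite le_in leqnn.
case: i lt0i le_in => // i _ le_in; apply: hess_minor_posneg_bounded => j le_ji.
by apply: a_bound; rewrite le_ji ltnW.
Qed.

End NonNegative.

(* The entries of a 0/t Hessenberg matrix whose minors have the signs [g]. *)
Definition pattern g i j : R := if g i == g j.+1 then 0 else t.

Section Pattern.
Variable g : nat -> bool.
Hypothesis g0 : g 0%N = true.

Let E := hess_minor (pattern g) s.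
Let S b k := \sum_(i < k.+1) s ^+ (k - i) * (if g i == b then E i else 0).

Lemma hess_minor_pattern_sum k : E k.+1 = - (t * S (~~ g k.+1) k).
Proof.
rewrite /E hess_minorS /S mulr_sumr; congr (- _); apply: eq_bigr => i _.
by rewrite [pattern g i k]/pattern /E; case: (g i); case: (g k.+1) => /=; ring.
Qed.

Lemma walk_pattern k : walk (fun i => g i.+1) k (1, 0) = (S true k, - S false k).
Proof.
elim: k => [|k IH].
  by rewrite /S !big_ord1 g0 /E hess_minor0 /= mulr1 mulr0 oppr0.
have S_rec b : S b k.+1 = s * S b k + (if g k.+1 == b then E k.+1 else 0).
  by rewrite /S (sum_pow_weightsS s (fun i => if g i == b then E i else 0)).
rewrite walkS IH !S_rec hess_minor_pattern_sum /step.
by case: (g k.+1) => /=; congr pair; ring.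
Qed.

Lemma hess_minor_pattern k :
  hess_minor (pattern g) s k.+1 = if g k.+1 then t * (walk (fun i => g i.+1) k (1, 0)).2
                                  else - (t * (walk (fun i => g i.+1) k (1, 0)).1).
Proof. by rewrite -/E hess_minor_pattern_sum walk_pattern; case: (g k.+1) => /=; ring. Qed.

End Pattern.

Lemma det_le_value n (A : 'M[R]_n.+1) : 0 < s -> 0 <= t ->
  in_Gs s (fun x => (0 <= x) && (x <= t)) A -> `|\det A| <= value n (1, 0).
Proof.
move=> s_gt0 t_ge0 hessA.
rewrite (det_hessenberg (lt0r_neq0 s_gt0) hessA) normrM normrX normrN1 expr1n mul1r.
apply: hess_minor_le_value => //; first exact: ltW.
move=> i j /andP [le_ij le_jn]; have [_ [_]] := hessA (inord i) (inord j); apply.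
by rewrite !inordK // ltnS // (leq_trans le_ij).
Qed.

Lemma exists_det_value n : 0 < s -> 0 <= t ->
  exists A : 'M[R]_n.+1,
    in_Gs s (fun x => (0 <= x) && (x <= t)) A /\ `|\det A| = value n (1, 0).
Proof.
move=> s_gt0 t_ge0.
have [c value_c] := value_walk n (1, 0).
set w := walk c n (1, 0) in value_c.
have [w1_ge0 w2_ge0] : 0 <= w.1 /\ 0 <= w.2 by apply: walk_ge0 => //; apply: ltW.
pose g k := if k is k'.+1 then (if k' == n then w.1 <= w.2 else c k') else true.
pose A : 'M[R]_n.+1 := \matrix_(i, j)
  if (i <= j)%N then pattern g i j else if i == j.+1 :> nat then s else 0.
have hessA : in_Gs s (fun x => (0 <= x) && (x <= t)) A.
  move=> i j; rewrite !mxE; split; [|split].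
  - by move=> ->; rewrite ltnn eqxx.
  - by move=> lt_ji; rewrite leqNgt (ltn_trans _ lt_ji) ?gtn_eqF.
  - by move=> ->; rewrite /pattern; case: ifP => _; rewrite lexx t_ge0.
exists A; split => //.
rewrite (det_hessenberg (lt0r_neq0 s_gt0) hessA) normrM normrX normrN1 expr1n mul1r.
have -> : hess_minor (fun i j => A (inord i) (inord j)) s n.+1 = hess_minor (pattern g) s n.+1.
  apply: (@eq_hess_minor _ _ _ s n.+1) => // i j /andP [le_ij lt_jn].
  by rewrite mxE !inordK ?le_ij // (leq_ltn_trans le_ij).
rewrite hess_minor_pattern // (@eq_walk _ c) => [|i lt_in]; last by rewrite /g ltn_eqF.
rewrite value_c /= eqxx -/w; case: leP => [le_w|lt_w].
- by rewrite ger0_norm ?mulr_ge0 // (max_idPr le_w).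
- by rewrite normrN ger0_norm ?mulr_ge0 // (max_idPl (ltW lt_w)).
Qed.

End Value.

Section ClosedForm.
Variables (R : realFieldType) (s t : R).
Hypotheses (t_gt0 : 0 < t) (t_le_s : t <= s) (s2_le : s ^+ 2 <= 2 * t ^+ 2)
  (cubic_ge0 : 0 <= t ^+ 3 - t ^+ 2 * s + 2 * t * s ^+ 2 - s ^+ 3).
Implicit Types (b : bool) (f g h p : R * R).

Local Notation step := (step s t).
Local Notation value := (value s t).

Let s_gt0 : 0 < s := lt_le_trans t_gt0 t_le_s.

Fixpoint xcoef j : R :=
  match j with
  | 0 => t ^+ 2 / s
  | 1 => s * t
  | (k.+1 as j').+1 => t * xcoef j' + s ^+ 2 * xcoef k
  end.
Arguments xcoef : simpl nomatch.

Lemma xcoefSS j : xcoef j.+2 = t * xcoef j.+1 + s ^+ 2 * xcoef j.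
Proof. by []. Qed.

Lemma xcoef_props j :
  [/\ 0 < xcoef j, s ^+ 2 * xcoef j <= t * xcoef j.+1 & xcoef j.+1 <= 2 * t * xcoef j].
Proof.
elim: j => [|j [x_gt0 x_le x_ge]].
  rewrite /=; split; first by rewrite divr_gt0 ?exprn_gt0.
    by rewrite le_eqVlt; apply/orP; left; apply/eqP; field; rewrite gt_eqF.
  rewrite -subr_ge0 (_ : _ - _ = t * (2 * t ^+ 2 - s ^+ 2) / s); last by field; rewrite gt_eqF.
  by rewrite divr_ge0 ?mulr_ge0 ?subr_ge0 // ltW.
have x1_gt0 : 0 < xcoef j.+1.
  by rewrite -(pmulr_rgt0 _ t_gt0) (lt_le_trans _ x_le) ?mulr_gt0 ?exprn_gt0.
have d_ge0 : 0 <= s ^+ 2 - t ^+ 2 by rewrite subr_ge0 ler_pXn2r // ?nnegrE ltW.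
have growth_gap : 0 <= (s ^+ 2 - t ^+ 2) * (2 * t * xcoef j - xcoef j.+1).
  by rewrite mulr_ge0 // subr_ge0.
have s2_gap : 0 <= t * xcoef j * (2 * t ^+ 2 - s ^+ 2) by rewrite !mulr_ge0 ?subr_ge0 // ltW.
by rewrite xcoefSS; split => //; nra.
Qed.

Lemma Dn_xcoef j : Dn j.+4 s t = t * s * xcoef j.+1 + s * xcoef j.+2.
Proof.
suff : Dn j.+4 s t = t * s * xcoef j.+1 + s * xcoef j.+2 /\
       Dn j.+4.+1 s t = t * s * xcoef j.+2 + s * xcoef j.+3 by case.
elim: j => [|j [IH4 IH5]]; first by split; rewrite /= ?xcoefSS /=; field; rewrite gt_eqF.
split=> //; rewrite (_ : Dn j.+4.+2 s t = t * Dn j.+4.+1 s t + s ^+ 2 * Dn j.+4 s t) //.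
by rewrite IH4 IH5 (xcoefSS j.+2) (xcoefSS j.+1); ring.
Qed.

Definition dot f p := f.1 * p.1 + f.2 * p.2.

Definition pullback b f : R * R :=
  if b then (s * f.1, t * f.1 + s * f.2) else (s * f.1 + t * f.2, s * f.2).

Lemma dot_step b f p : dot f (step b p) = dot (pullback b f) p.
Proof. by case: b; rewrite /dot /=; ring. Qed.

Lemma dot_swap f p : dot f (swap p) = dot (swap f) p.
Proof. by rewrite /dot addrC. Qed.

Lemma swap_step b p : swap (step b p) = step (~~ b) (swap p).
Proof. by case: b. Qed.

(* On the nonnegative quadrant [value m] is the maximum of the forms in
   [forms m] and their swaps; the forms for m + 1 are the pullbacks of those
   for m that are not dominated. *)
Definition forms3 (p q r : R) : seq (R * R) :=
  [:: (s ^+ 2 * q, t * s * q + s * r); (s * r, t * r + s ^+ 2 * q);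
      (t * s ^+ 2 * p + s ^+ 2 * q, t ^+ 2 * s * p + t * s * q + s ^+ 3 * p)].

Definition forms m : seq (R * R) :=
  match m with
  | 0 => [:: (t, 0)]
  | 1 => [:: (s * t, t ^+ 2)]
  | 2 => [:: (s ^+ 2 * t, 2 * s * t ^+ 2); (s ^+ 2 * t + t ^+ 3, s * t ^+ 2)]
  | j.+3 => forms3 (xcoef j) (xcoef j.+1) (xcoef j.+2)
  end.

Lemma forms3E : forms 3 =
  [:: (s ^+ 3 * t, 3 * s ^+ 2 * t ^+ 2); (2 * s ^+ 2 * t ^+ 2, 2 * s * t ^+ 3 + s ^+ 3 * t);
      (s * t ^+ 3 + s ^+ 3 * t, t ^+ 4 + 2 * s ^+ 2 * t ^+ 2)].
Proof. by rewrite /= /forms3 /=; do !congr (_ :: _); congr pair; field; rewrite ?gt_eqF. Qed.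

Definition potential m p := \big[Num.max/0]_(f <- forms m) Num.max (dot f p) (dot f (swap p)).

Lemma potential_ge0 m p : 0 <= potential m p.
Proof. exact: bigmax_ge_id. Qed.

Lemma le_potential m f p : f \in forms m ->
  dot f p <= potential m p /\ dot f (swap p) <= potential m p.
Proof.
move=> f_in; have : Num.max (dot f p) (dot f (swap p)) <= potential m p.
  exact: (le_bigmax_seq _ _ _ (fun f => Num.max (dot f p) (dot f (swap p))) f_in).
by rewrite ge_max => /andP.
Qed.

Lemma potential_le m p c : 0 <= c ->
  (forall f, f \in forms m -> dot f p <= c /\ dot f (swap p) <= c) -> potential m p <= c.
Proof.
move=> c_ge0 le_c; rewrite /potential big_seq; apply: (bigmax_le _ c_ge0) => f f_in.
by rewrite ge_max; apply/andP; apply: le_c.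
Qed.

Lemma potential_swap m p : potential m (swap p) = potential m p.
Proof. by apply: eq_bigr => f _; rewrite maxC; case: p. Qed.

Definition le_pair g h := g.1 <= h.1 /\ g.2 <= h.2.

Definition dominated m g := forall p, 0 <= p.1 -> 0 <= p.2 -> dot g p <= potential m p.

Lemma dominated_by m g h : h \in forms m -> le_pair g h -> dominated m g.
Proof.
move=> h_in [le1 le2] p p1_ge0 p2_ge0; have [le_h _] := le_potential p h_in.
by apply: le_trans le_h; rewrite lerD // ler_wpM2r.
Qed.

Lemma dominated_by_swap m g h : h \in forms m -> le_pair g (swap h) -> dominated m g.
Proof.
move=> h_in [le1 le2] p p1_ge0 p2_ge0; have [_ le_h] := le_potential p h_in.
by apply: le_trans le_h; rewrite dot_swap lerD // ler_wpM2r.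
Qed.

Section Triple.
Variables p q r : R.
Hypotheses (p_ge0 : 0 <= p) (q_ge0 : 0 <= q) (r_def : r = t * q + s ^+ 2 * p).
Hypotheses (sp_le : s ^+ 2 * p <= t * q) (sq_le : s ^+ 2 * q <= t * r).

Local Notation r' := (t * r + s ^+ 2 * q).

Lemma forms3_succ g : g \in forms3 q r r' ->
  exists2 f, f \in forms3 p q r & g = pullback true f \/ g = pullback true (swap f).
Proof.
rewrite !inE => /or3P [] /eqP ->.
- exists (s * r, t * r + s ^+ 2 * q); first by rewrite !inE eqxx orbT.
  by left; rewrite /pullback /=; congr pair; ring.
- exists (s * r, t * r + s ^+ 2 * q); first by rewrite !inE eqxx orbT.
  by right; rewrite /pullback /=; congr pair; ring.
- exists (s ^+ 2 * q, t * s * q + s * r); first by rewrite !inE eqxx.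
  by right; rewrite /pullback /=; congr pair; ring.
Qed.

Lemma forms3_pullback f : f \in forms3 p q r ->
  (exists2 h, h \in forms3 q r r' & le_pair (pullback true f) h) /\
  (exists2 h, h \in forms3 q r r' & le_pair (pullback true (swap f)) h).
Proof.
have s_ge0 := ltW s_gt0; have t_ge0 := ltW t_gt0.
have r_ge0 : 0 <= r by rewrite r_def addr_ge0 ?mulr_ge0 ?exprn_ge0.
have sp_le_q : s * p <= q.
  rewrite -(ler_pM2l s_gt0) mulrA -expr2 (le_trans sp_le) // ler_wpM2r //.
have str_ge0 : 0 <= s * t * r by rewrite !mulr_ge0.
have st2q_ge0 : 0 <= s * t ^+ 2 * q by rewrite !mulr_ge0 ?exprn_ge0.
have sq_gap : 0 <= t * (t * r - s ^+ 2 * q) by rewrite mulr_ge0 // subr_ge0.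
have sp_gap : 0 <= t ^+ 2 * (t * q - s ^+ 2 * p) by rewrite mulr_ge0 ?exprn_ge0 // subr_ge0.
(* Dominating the pullback of the swapped third form by the second form is
   where [cubic_ge0] enters: the two coordinate gaps are these products. *)
have quad_gap : 0 <= s * (s ^+ 2 - s * t + t ^+ 2) * (q - s * p).
  by rewrite !mulr_ge0 ?subr_ge0 //; nra.
have cubic_gap : 0 <= (t ^+ 3 - t ^+ 2 * s + 2 * t * s ^+ 2 - s ^+ 3) * (q - s * p).
  by rewrite mulr_ge0 // subr_ge0.
have form1_in : (s ^+ 2 * r, t * s * r + s * r') \in forms3 q r r' by rewrite inE eqxx.
have form2_in : (s * r', t * r' + s ^+ 2 * r) \in forms3 q r r' by rewrite !inE eqxx orbT.
have form3_in :
    (t * s ^+ 2 * q + s ^+ 2 * r, t ^+ 2 * s * q + t * s * r + s ^+ 3 * q) \in forms3 q r r'.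
  by rewrite !inE eqxx !orbT.
rewrite !inE => /or3P [] /eqP -> ; split.
- by exists (s * r', t * r' + s ^+ 2 * r) => //; rewrite /le_pair /=; split; nra.
- exists (t * s ^+ 2 * q + s ^+ 2 * r, t ^+ 2 * s * q + t * s * r + s ^+ 3 * q) => //.
  by rewrite /le_pair /=; split; nra.
- by exists (s ^+ 2 * r, t * s * r + s * r') => //; rewrite /le_pair /=; split; nra.
- by exists (s * r', t * r' + s ^+ 2 * r) => //; rewrite /le_pair /=; split; nra.
- by exists (s * r', t * r' + s ^+ 2 * r) => //; rewrite /le_pair /= r_def; split; nra.
- by exists (s * r', t * r' + s ^+ 2 * r) => //; rewrite /le_pair /= r_def; split; nra.
Qed.

End Triple.

Lemma pullback_dominated m f : f \in forms m ->
  dominated m.+1 (pullback true f) /\ dominated m.+1 (pullback true (swap f)).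
Proof.
have s_ge0 := ltW s_gt0; have t_ge0 := ltW t_gt0.
case: m => [|[|[|j]]] f_in.
- move: f_in; rewrite inE => /eqP ->; split.
    by apply: (@dominated_by _ _ (s * t, t ^+ 2)); rewrite ?inE // /le_pair /=; split; nra.
  by apply: (@dominated_by_swap _ _ (s * t, t ^+ 2)); rewrite ?inE // /le_pair /=; split; nra.
- move: f_in; rewrite inE => /eqP ->; split.
    apply: (@dominated_by _ _ (s ^+ 2 * t, 2 * s * t ^+ 2)); first by rewrite inE eqxx.
    by rewrite /le_pair /=; split; nra.
  apply: (@dominated_by_swap _ _ (s ^+ 2 * t + t ^+ 3, s * t ^+ 2)).
    by rewrite !inE eqxx orbT.
  by rewrite /le_pair /=; split; nra.
- move: f_in; rewrite !inE => /orP [] /eqP ->; split.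
  + apply: (@dominated_by _ _ (s ^+ 3 * t, 3 * s ^+ 2 * t ^+ 2)); first by rewrite forms3E inE eqxx.
    by rewrite /le_pair /=; split; nra.
  + apply: (@dominated_by _ _ (2 * s ^+ 2 * t ^+ 2, 2 * s * t ^+ 3 + s ^+ 3 * t)).
      by rewrite forms3E !inE eqxx orbT.
    by rewrite /le_pair /=; split; nra.
  + apply: (@dominated_by _ _ (s * t ^+ 3 + s ^+ 3 * t, t ^+ 4 + 2 * s ^+ 2 * t ^+ 2)).
      by rewrite forms3E !inE eqxx !orbT.
    by rewrite /le_pair /=; split; nra.
  + apply: (@dominated_by _ _ (2 * s ^+ 2 * t ^+ 2, 2 * s * t ^+ 3 + s ^+ 3 * t)).
      by rewrite forms3E !inE eqxx orbT.
    by rewrite /le_pair /=; split; nra.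
- have [p_gt0 sp_le _] := xcoef_props j; have [q_gt0 sq_le _] := xcoef_props j.+1.
  have [[h h_in le_h] [h' h'_in le_h']] := forms3_pullback (ltW p_gt0) (ltW q_gt0) (xcoefSS j)
    sp_le sq_le f_in.
  by split; [apply: dominated_by le_h | apply: dominated_by le_h'].
Qed.

Lemma forms_succ m g : g \in forms m.+1 ->
  exists b, exists2 f, f \in forms m & g = pullback b f \/ g = pullback b (swap f).
Proof.
case: m => [|[|[|j]]].
- rewrite inE => /eqP ->; exists true, (t, 0); rewrite ?inE //.
  by left; rewrite /pullback /=; congr pair; ring.
- rewrite !inE => /orP [] /eqP ->; [exists true | exists false]; exists (s * t, t ^+ 2);
    rewrite ?inE //; by left; rewrite /pullback /=; congr pair; ring.
- rewrite forms3E !inE => /or3P [] /eqP ->; exists true.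
  + exists (s ^+ 2 * t, 2 * s * t ^+ 2); first by rewrite inE eqxx.
    by left; rewrite /pullback /=; congr pair; ring.
  + exists (s ^+ 2 * t, 2 * s * t ^+ 2); first by rewrite inE eqxx.
    by right; rewrite /pullback /=; congr pair; ring.
  + exists (s ^+ 2 * t + t ^+ 3, s * t ^+ 2); first by rewrite !inE eqxx orbT.
    by left; rewrite /pullback /=; congr pair; ring.
- move=> /(@forms3_succ (xcoef j) (xcoef j.+1) (xcoef j.+2)) [f f_in eq_g].
  by exists true, f.
Qed.

Lemma potential_step m b p : 0 <= p.1 -> 0 <= p.2 -> potential m (step b p) <= potential m.+1 p.
Proof.
wlog -> : b p / b = true => [wlog_true p1_ge0 p2_ge0|p1_ge0 p2_ge0].
  case: b; first exact: wlog_true.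
  by rewrite -potential_swap swap_step -(potential_swap m.+1) wlog_true.
apply: potential_le => [|f f_in]; first exact: potential_ge0.
have [dom dom_swap] := pullback_dominated f_in.
by rewrite dot_swap !dot_step; split; [apply: dom | apply: dom_swap].
Qed.

Lemma dot_pullback_le m b f p : f \in forms m ->
  dot (pullback b f) p <= potential m (step b p) /\
  dot (pullback b (swap f)) p <= potential m (step b p).
Proof.
move=> f_in; have [le_f le_swap_f] := le_potential (step b p) f_in.
by rewrite -!dot_step -dot_swap.
Qed.

Lemma potentialS_le m p :
  potential m.+1 p <= Num.max (potential m (step true p)) (potential m (step false p)).
Proof.
set M := Num.max _ _; have le_M b : potential m (step b p) <= M.
  by rewrite le_max; case: b; rewrite lexx ?orbT.
have step_swap b : potential m (step b (swap p)) = potential m (step (~~ b) p).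
  by rewrite -[b in step b _]negbK -swap_step potential_swap.
apply: potential_le; first exact: le_trans (potential_ge0 _ _) (le_M true).
move=> g /forms_succ [b [f f_in eq_g]].
have [le1 le2] := dot_pullback_le b p f_in.
have [le1' le2'] := dot_pullback_le b (swap p) f_in; rewrite step_swap in le1' le2'.
by case: eq_g => ->; split;
  [ exact: le_trans le1 (le_M _) | exact: le_trans le1' (le_M _)
  | exact: le_trans le2 (le_M _) | exact: le_trans le2' (le_M _) ].
Qed.

Lemma value_potential m p : 0 <= p.1 -> 0 <= p.2 -> value m p = potential m p.
Proof.
have s_ge0 := ltW s_gt0; have t_ge0 := ltW t_gt0.
elim: m p => [|m IH] p p1_ge0 p2_ge0.
  rewrite /potential big_cons big_nil /dot /= !mul0r !addr0 -maxr_pMr //.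
  by apply/esym/max_idPl; rewrite mulr_ge0 // le_max p1_ge0.
have [a1 a2] := step_ge0 s_ge0 t_ge0 true p1_ge0 p2_ge0.
have [b1 b2] := step_ge0 s_ge0 t_ge0 false p1_ge0 p2_ge0.
rewrite valueS !IH //; apply/le_anti.
by rewrite potentialS_le ge_max !potential_step.
Qed.

Lemma value_Dn j : value j.+3 (1, 0) = Dn j.+4 s t.
Proof.
have s_ge0 := ltW s_gt0; have t_ge0 := ltW t_gt0.
rewrite value_potential ?ler01 // Dn_xcoef.
have [p_gt0 sp_le _] := xcoef_props j; have [q_gt0 sq_le _] := xcoef_props j.+1.
have [r_gt0 _ _] := xcoef_props j.+2; have r_def := xcoefSS j.
set p := xcoef j in p_gt0 sp_le r_def *; set q := xcoef j.+1 in q_gt0 sp_le sq_le r_def *.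
set r := xcoef j.+2 in r_gt0 sq_le r_def *.
have sq_le_r : s * q <= r.
  by rewrite -(ler_pM2l s_gt0) mulrA -expr2 (le_trans sq_le) // ler_wpM2r // ltW.
have tp_le_q : t * p <= q.
  have t2_le_s2 : t ^+ 2 <= s ^+ 2 by rewrite ler_pXn2r // ?nnegrE ltW.
  rewrite -(ler_pM2l t_gt0) mulrA -expr2 (le_trans _ sp_le) //.
  by rewrite ler_wpM2r // ltW.
have s_le_2t : s <= 2 * t by nra.
have r_gap : 0 <= (s - t) * (r - s * q) by rewrite mulr_ge0 ?subr_ge0.
have p_gap : 0 <= s ^+ 2 * p * (s - t) by rewrite !mulr_ge0 ?exprn_ge0 ?subr_ge0 // ltW.
have q_gap : 0 <= s * q * (2 * t - s) by rewrite !mulr_ge0 ?subr_ge0 // ltW.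
have tp_gap : 0 <= s * t * (q - t * p) by rewrite !mulr_ge0 ?subr_ge0.
have tsq_ge0 : 0 <= t * s * q by rewrite !mulr_ge0 // ltW.
apply/le_anti/andP; split.
- apply: potential_le => [|f]; first by rewrite addr_ge0 ?mulr_ge0 // ltW.
  rewrite /= !inE => /or3P [] /eqP ->; rewrite /dot /= !mulr1 !mulr0 ?addr0 ?add0r -/p -/q;
    by split; nra.
- have f_in : (s ^+ 2 * q, t * s * q + s * r) \in forms j.+3 by rewrite inE eqxx.
  have [_] := le_potential (1, 0) f_in.
  by rewrite /dot /= mulr0 mulr1 add0r.
Qed.

End ClosedForm.

Lemma sqr_le_of_five_quarters (R : realFieldType) (s t : R) :
  0 < t -> t <= s -> s <= t * (1 + 4^-1) -> s ^+ 2 <= 2 * t ^+ 2.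
Proof.
move=> t_gt0 t_le_s s_le; have s_le_5t : 4 * s <= 5 * t by lra.
nra.
Qed.

Lemma cubic_ge0_of_five_quarters (R : realFieldType) (s t : R) :
  0 < t -> t <= s -> s <= t * (1 + 4^-1) ->
  0 <= t ^+ 3 - t ^+ 2 * s + 2 * t * s ^+ 2 - s ^+ 3.
Proof.
move=> t_gt0 t_le_s s_le; have d_ge0 : 0 <= s - t by rewrite subr_ge0.
have d_le : 4 * (s - t) <= t by lra.
have -> : t ^+ 3 - t ^+ 2 * s + 2 * t * s ^+ 2 - s ^+ 3 = t ^+ 3 - t * (s - t) ^+ 2 - (s - t) ^+ 3.
  by ring.
have sqr_gap : 0 <= t * (t - 4 * (s - t)) * (t + 4 * (s - t)).
  by rewrite !mulr_ge0 ?subr_ge0; lra.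
have cube_gap : 0 <= (s - t) ^+ 2 * (t - 4 * (s - t)) by rewrite mulr_ge0 ?exprn_ge0 ?subr_ge0.
have t3_ge0 : 0 <= t ^+ 3 by rewrite exprn_ge0 // ltW.
nra.
Qed.

Theorem theorem2p8 (R : realType) (n : nat) (hn : (4 <= n)%N) :
  exists eps : R, 0 < eps /\
    forall s t : R, 0 < t -> t <= s -> s <= t * (1 + eps) ->
      (exists A : 'M[R]_n,
          in_Gs s (fun x => (0 <= x) && (x <= t)) A /\ `|\det A| = Dn n s t) /\
      (forall A : 'M[R]_n,
          in_Gs s (fun x => (0 <= x) && (x <= t)) A -> `|\det A| <= Dn n s t).
Proof.
exists 4^-1; split => [|s t t_gt0 t_le_s s_le]; first by rewrite invr_gt0 ltr0n.
case: n hn => [|[|[|[|j]]]] // _.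
have s_gt0 : 0 < s := lt_le_trans t_gt0 t_le_s.
have s2_le := sqr_le_of_five_quarters t_gt0 t_le_s s_le.
have cubic := cubic_ge0_of_five_quarters t_gt0 t_le_s s_le.
rewrite -(value_Dn t_gt0 t_le_s s2_le cubic).
split; first exact: exists_det_value _ s_gt0 (ltW t_gt0).
by move=> A; apply: det_le_value s_gt0 (ltW t_gt0).
Qed.
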